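(* Let $k$ be a positive integer and $\mathbb{A}$ an alphabet with exactly $k$ letters. The number of extremal $XYX$-avoiding words over $\mathbb{A}$ is $k!$.
   Context: A word is a finite sequence of letters. A factor of $W$ is a word $U$ with $W=W_1UW_2$ for some (possibly empty) words $W_1,W_2$. A word $W$ contains the pattern $XYX$ if some factor of $W$ can be written as $ABA$ with $A,B$ nonempty words ($A$ and $B$ may be equal); otherwise $W$ avoids $XYX$. An extension of a word $W$ over $\mathbb{A}$ is any word $W_1xW_2$ with $W=W_1W_2$ ($W_1,W_2$ possibly empty) and $x\in\mathbb{A}$. A word over $\mathbb{A}$ is extremal $XYX$-avoiding if it avoids $XYX$ and every extension of it contains $XYX$. *)

From mathcomp Require Import all_boot.
Set Implicit Arguments. Unset Strict Implicit. Unset Printing Implicit Defensive.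

Definition factor (T : Type) (U W : seq T) : Prop :=
  exists W1 W2, W = W1 ++ U ++ W2.

Definition containsXYX (T : Type) (W : seq T) : Prop :=
  exists A B : seq T, A <> [::] /\ B <> [::] /\ factor (A ++ B ++ A) W.

Definition avoidsXYX (T : Type) (W : seq T) : Prop := ~ containsXYX W.

Definition extension (T : Type) (W V : seq T) : Prop :=
  exists W1 W2 (x : T), W = W1 ++ W2 /\ V = W1 ++ x :: W2.

Definition extremalXYX (T : Type) (W : seq T) : Prop :=
  avoidsXYX W /\ forall V, extension W V -> containsXYX V.

From mathcomp Require Import all_boot.
(* Taking A to be a single letter, a word contains XYX iff some letter recurs
   at distance at least two; so in an XYX-free word the occurrences of each
   letter are adjacent, and there are at most two of them.  An extremal word
   contains every letter (otherwise prepend it) exactly twice (a single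
   occurrence could be doubled), hence it is x1 x1 x2 x2 ... xk xk for an
   ordering x1 ... xk of the alphabet.  Conversely, inserting any letter into
   such a word produces a third occurrence of it.  Extremal words therefore
   correspond to the k! orderings of the alphabet. *)

Set Implicit Arguments. Unset Strict Implicit. Unset Printing Implicit Defensive.

Section Words.

Variable T : eqType.
Implicit Types (W p : seq T) (x y : T).

Fixpoint xyx_free W : bool :=
  if W is y :: W' then (y \notin behead W') && xyx_free W' else true.

Fixpoint stutter p : seq T := if p is x :: p' then x :: x :: stutter p' else [::].

(* If A = a :: A', then ABA = a (A' B) a A'. *)
Lemma containsXYX_letter W : containsXYX W <->
  exists W1 a B W2, B <> [::] /\ W = W1 ++ a :: B ++ a :: W2.
Proof.
split=> [[[|a A] [B [_ [nzB [W1 [W2 ->]]]]]] // | [W1 [a [B [W2 [nzB ->]]]]]].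
  exists W1, a, (A ++ B), (A ++ W2); split; first by case: A; case: B nzB.
  by rewrite /= -!catA.
by exists [:: a], B; do 2!split=> //; exists W1, W2; rewrite /= -!catA.
Qed.

Lemma containsXYX_cons y W :
  containsXYX (y :: W) <-> containsXYX W \/ y \in behead W.
Proof.
split=> [/containsXYX_letter[[|z W1] [a [B [W2 [nzB /= [-> ->]]]]]] | ].
- by right; case: B nzB => // b B _; rewrite mem_cat inE eqxx orbT.
- by left; apply/containsXYX_letter; exists W1, a, B, W2.
case=> [/containsXYX_letter[W1 [a [B [W2 [nzB ->]]]]] | ].
  by apply/containsXYX_letter; exists (y :: W1), a, B, W2.
case: W => //= z W /splitPr[W1 W2].
by apply/containsXYX_letter; exists [::], y, (z :: W1), W2.
Qed.

Lemma containsXYXP W : reflect (containsXYX W) (~~ xyx_free W).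
Proof.
elim: W => [|y W IH] /=.
  by right => /containsXYX_letter[[|? ?] [? [? [? []]]]].
rewrite negb_and negbK; apply: (iffP orP) => [|/containsXYX_cons].
  by case=> [yW | /IH cW]; apply/containsXYX_cons; [right | left].
by case=> [/IH | ]; [right | left].
Qed.

Lemma avoidsXYXP W : reflect (avoidsXYX W) (xyx_free W).
Proof.
apply: (iffP idP) => [freeW /containsXYXP | avoidW]; first by rewrite freeW.
by apply/negPn/negP => /containsXYXP.
Qed.

Lemma xyx_free_count x W : xyx_free W -> count_mem x W <= 2.
Proof.
elim: W => //= y W IH /andP[yW freeW]; have [<- | _] := eqP; last exact: IH.
case: W yW {IH freeW} => //= z W /count_memPn->.
by rewrite addn0; case: (z == y).
Qed.

Lemma mem_stutter p : stutter p =i p.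
Proof. by elim: p => //= x p IH z; rewrite !inE IH orbA orbb. Qed.

Lemma count_stutter x p : count_mem x (stutter p) = (count_mem x p).*2.
Proof. by elim: p => //= y p ->; rewrite doubleD addnA addnn. Qed.

Lemma stutter_inj : injective stutter.
Proof. by elim=> [|x p IH] [|y q] //= [-> _ /IH->]. Qed.

Lemma xyx_free_stutter p : uniq p -> xyx_free (stutter p).
Proof.
elim: p => //= x p IH /andP[xp /IH->]; rewrite mem_stutter xp andbT.
by apply: contra xp => /mem_behead; rewrite mem_stutter.
Qed.

Lemma xyx_free_dup W1 W2 y : y \notin W1 -> y \notin W2 ->
  xyx_free (W1 ++ y :: W2) -> xyx_free (W1 ++ y :: y :: W2).
Proof.
move=> + yW2; elim: W1 => [|z W1 IH] /=; first by move=> _ /andP[-> ->]; rewrite yW2.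
rewrite inE negb_or => /andP[yz yW1] /andP[zW freeW]; rewrite IH // andbT.
case: W1 zW {IH yW1 freeW} => [|u W1] /=; first by rewrite inE negb_or (eq_sym z) yz.
by rewrite !mem_cat !inE; case: (z == y); rewrite ?orbT.
Qed.

Lemma xyx_free_count2_stutter W : xyx_free W ->
  {in W, forall x, count_mem x W = 2} -> exists2 p, uniq p & W = stutter p.
Proof.
have [n] := ubnP (size W); elim: n W => // n IH [|y [|z W]] /= ltWn.
- by exists [::].
- by move=> _ /(_ y); rewrite inE eqxx => /(_ isT).
case/and3P=> yW _ freeW count2.
have zy : z = y.
  have:= count2 y; rewrite /= inE eqxx (count_memPn yW) => /(_ isT).
  by case: eqP.
subst z; have [| x xW | p up defW] := IH W _ freeW _.
- by rewrite -ltnS ltnW.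
- have:= count2 x; rewrite /= !inE xW !orbT => /(_ isT).
  by case: eqP xW yW => [-> -> | _ _ _].
by exists (y :: p); rewrite /= ?defW // up andbT -mem_stutter -defW.
Qed.

Lemma extremalXYX_insert W1 W2 x :
  extremalXYX (W1 ++ W2) -> ~~ xyx_free (W1 ++ x :: W2).
Proof. by case=> _ ext; apply/containsXYXP/ext; exists W1, W2, x. Qed.

Lemma extremalXYX_mem W x : extremalXYX W -> x \in W.
Proof.
move=> extW; apply: contraT => xW; have:= @extremalXYX_insert [::] W x extW.
by rewrite /= (contra (@mem_behead _ W x) xW) (introT (avoidsXYXP W) extW.1).
Qed.

Lemma extremalXYX_count x W : extremalXYX W -> count_mem x W = 2.
Proof.
move=> extW; have freeW : xyx_free W by apply/avoidsXYXP; case: extW.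
have xW := extremalXYX_mem x extW.
move: extW freeW; case/splitPr: xW => W1 W2 extW freeW.
have:= xyx_free_count x freeW; rewrite count_cat /= eqxx add1n addnS ltnS.
have [/eqP | pos le1] := posnP (count_mem x W1 + count_mem x W2); last first.
  by apply/eqP; rewrite eqSS eqn_leq le1.
rewrite addn_eq0 => /andP[/eqP/count_memPn xW1 /eqP/count_memPn xW2] _.
by have:= @extremalXYX_insert W1 (x :: W2) x extW; rewrite xyx_free_dup.
Qed.

End Words.

Section FiniteAlphabet.

Variable T : finType.
Implicit Types (w p : seq T).

Lemma stutter_extremalXYX p : perm_eq p (enum T) -> extremalXYX (stutter p).
Proof.
move=> pT; have up : uniq p by rewrite (perm_uniq pT) enum_uniq.
split=> [|_ [W1 [W2 [x [defW ->]]]]]; first exact/avoidsXYXP/xyx_free_stutter.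
apply/containsXYXP/negP => /(xyx_free_count x).
have:= count_stutter x p.
rewrite defW (count_uniq_mem x up) (perm_mem pT) mem_enum.
by rewrite !count_cat /= eqxx addnCA => ->.
Qed.

Lemma extremalXYX_stutter w :
  extremalXYX w -> exists2 p, perm_eq p (enum T) & w = stutter p.
Proof.
move=> extw; have freew : xyx_free w by apply/avoidsXYXP; case: extw.
have [p up defw] :=
  xyx_free_count2_stutter freew (fun x _ => extremalXYX_count x extw).
exists p => //; apply: uniq_perm up (enum_uniq T) _ => x.
by rewrite mem_enum -mem_stutter -defw extremalXYX_mem.
Qed.

End FiniteAlphabet.

Theorem mainTheorem3 (k : nat) (T : finType) (hk : 0 < k) (hT : #|T| = k) :
  exists s : seq (seq T),
    [/\ uniq s, (forall w : seq T, w \in s <-> extremalXYX w) & size s = k`!].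
Proof.
exists (map (@stutter T) (permutations (enum T))); split.
- by rewrite map_inj_uniq ?permutations_uniq //; apply: stutter_inj.
- move=> w; split=> [/mapP[p] | /extremalXYX_stutter[p pT ->]].
    by rewrite mem_permutations => pT ->; apply: stutter_extremalXYX.
  by rewrite map_f // mem_permutations.
- by rewrite size_map size_permutations ?enum_uniq // -cardE hT.
Qed.
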